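(* Let $\phi_*\in(0,\pi/2)$, $\delta_*=\min\{\phi_*,\tfrac\pi2-\phi_*\}$, and $R\ge\max\{\frac{34r}{\phi_*},\frac{14.6r}{\delta_*\sin\phi_*}\}$. For the billiard map on $Q(\phi_*,R)$ and any $x\in M_r$ for which $x_0,x_1,x_2$ are defined, if $d_1<2r$ then $x_0\in V(\delta_* )$ and $x_2\in U(\delta_* )$.
   Context: Setting: $r=1$, $\phi_*\in(0,\pi/2)$, $Q(\phi_*,R)=D(O_r,r)\cap D(O_R,R)$ with $|O_rO_R|=\sqrt{R^2-r^2\sin^2\phi_*}-r\cos\phi_*$; boundary arcs $\Gamma_r$ (position angles $\phi\in[\phi_*,2\pi-\phi_*]$ about $O_r$, measured counterclockwise from $\overrightarrow{O_RO_r}$) and $\Gamma_R$ (angles in $(-\Phi_*,\Phi_* )$ about $O_R$, $R\sin\Phi_*=r\sin\phi_*$). Phase space $M=M_r\sqcup M_R$, coordinates $(\phi,\theta)$, $\theta\in(0,\pi)$ the angle from the positive tangent direction; $F$ the billiard map. $M_r^{in}=M_r\cap F(M_R)$, $M_r^{out}=M_r\cap F^{-1}(M_R)$, $M_R^{out}=M_R\cap F^{-1}(M_r)$. Notation for $x\in M_r$: $n_0=\inf\{n\ge0:F^nx\in M_r^{out}\}$, $x_0=(\phi_0,\theta_0)=F^{n_0}x$, $x_1=(\phi_1,\theta_1)=Fx_0\in M_R$, $n_1=\inf\{n\ge0:F^nx_1\in M_R^{out}\}$, $x_2=(\phi_2,\theta_2)=F^{n_1+1}x_1\in M_r^{in}$;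 $d_0=r\sin\theta_0$, $d_1=R\sin\theta_1$, $d_2=r\sin\theta_2$. With $x_*=(2\pi-\phi_*,\phi_* )$, $y_*=(\phi_*,\pi-\phi_* )$, $I(\phi,\theta)=(\phi,\pi-\theta)$ and Euclidean balls $B(z,\delta)$ in $(\phi,\theta)$ coordinates: $V(\delta)=(B(x_*,\delta)\cup B(y_*,\delta))\cap M_r^{out}$, $U(\delta)=(B(Ix_*,\delta)\cup B(Iy_*,\delta))\cap M_r^{in}$. *)

From Stdlib Require Import Reals Lra.
Open Scope R_scope.

(* Billiard in the lens Q(phis,Rb) = D(O_r,r) ∩ D(O_R,Rb), with r = 1.
   Coordinates: O_R = (0,0), O_r = (c,0) where c = |O_r O_R|; the vector
   O_R -> O_r is the positive x-axis, from which position angles are measured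
   counterclockwise. *)

Definition rr : R := 1.

Definition dist_centers (phis Rb : R) : R :=
  sqrt (Rb ^ 2 - rr ^ 2 * (sin phis) ^ 2) - rr * cos phis.

Definition Phis (phis Rb : R) : R := asin (rr * sin phis / Rb).

Inductive side := Sr | SR.

Record phase := mkPhase { sd : side; ph : R; th : R }.

Definition inMr (phis Rb : R) (x : phase) : Prop :=
  sd x = Sr /\ phis <= ph x <= 2 * PI - phis /\ 0 < th x < PI.

Definition inMR (phis Rb : R) (x : phase) : Prop :=
  sd x = SR /\ - Phis phis Rb < ph x < Phis phis Rb /\ 0 < th x < PI.

Definition inM (phis Rb : R) (x : phase) : Prop := inMr phis Rb x \/ inMR phis Rb x.

Definition center_x (phis Rb : R) (x : phase) : R :=
  match sd x with Sr => dist_centers phis Rb | SR => 0 end.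
Definition radius (Rb : R) (x : phase) : R :=
  match sd x with Sr => rr | SR => Rb end.

Definition posx (phis Rb : R) (x : phase) : R :=
  center_x phis Rb x + radius Rb x * cos (ph x).
Definition posy (phis Rb : R) (x : phase) : R :=
  radius Rb x * sin (ph x).

Definition tanx (x : phase) : R := - sin (ph x).
Definition tany (x : phase) : R := cos (ph x).

(* outgoing unit velocity: tangent rotated counterclockwise by theta
   (towards the interior of Q) *)
Definition velx (x : phase) : R := cos (th x) * tanx x - sin (th x) * cos (ph x).
Definition vely (x : phase) : R := cos (th x) * tany x - sin (th x) * sin (ph x).

(* billiard map as a (functional) relation: F x = y *)
Definition Fmap (phis Rb : R) (x y : phase) : Prop :=
  inM phis Rb x /\ inM phis Rb y /\
  (exists t : R, 0 < t /\
     posx phis Rb y = posx phis Rb x + t * velx x /\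
     posy phis Rb y = posy phis Rb x + t * vely x) /\
  cos (th y) = velx x * tanx y + vely x * tany y.

Inductive Fiter (phis Rb : R) : nat -> phase -> phase -> Prop :=
| Fiter0 : forall x, Fiter phis Rb O x x
| FiterS : forall n x y z, Fmap phis Rb x y -> Fiter phis Rb n y z ->
                           Fiter phis Rb (S n) x z.

Definition Mr_in (phis Rb : R) (x : phase) : Prop :=
  inMr phis Rb x /\ exists y, inMR phis Rb y /\ Fmap phis Rb y x.
Definition Mr_out (phis Rb : R) (x : phase) : Prop :=
  inMr phis Rb x /\ exists y, inMR phis Rb y /\ Fmap phis Rb x y.
Definition MR_out (phis Rb : R) (x : phase) : Prop :=
  inMR phis Rb x /\ exists y, inMr phis Rb y /\ Fmap phis Rb x y.

(* x0 = F^{n0} x with n0 = inf{n >= 0 : F^n x in Mr_out} *)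
Definition is_x0 (phis Rb : R) (x x0 : phase) : Prop :=
  exists n0 : nat, Fiter phis Rb n0 x x0 /\ Mr_out phis Rb x0 /\
    forall (m : nat) (z : phase), (m < n0)%nat -> Fiter phis Rb m x z ->
      ~ Mr_out phis Rb z.

Definition is_x1 (phis Rb : R) (x0 x1 : phase) : Prop := Fmap phis Rb x0 x1.

(* x2 = F^{n1+1} x1 with n1 = inf{n >= 0 : F^n x1 in MR_out} *)
Definition is_x2 (phis Rb : R) (x1 x2 : phase) : Prop :=
  exists (n1 : nat) (z : phase), Fiter phis Rb n1 x1 z /\ MR_out phis Rb z /\
    (forall (m : nat) (w : phase), (m < n1)%nat -> Fiter phis Rb m x1 w ->
      ~ MR_out phis Rb w) /\
    Fmap phis Rb z x2.

Definition delta_star (phis : R) : R := Rmin phis (PI / 2 - phis).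

Definition in_ball (a b delta : R) (x : phase) : Prop :=
  sqrt ((ph x - a) ^ 2 + (th x - b) ^ 2) < delta.

(* x_* = (2pi - phis, phis), y_* = (phis, pi - phis), I(phi,theta) = (phi, pi - theta) *)
Definition Vset (phis Rb delta : R) (x : phase) : Prop :=
  (in_ball (2 * PI - phis) phis delta x \/ in_ball phis (PI - phis) delta x) /\
  Mr_out phis Rb x.
Definition Uset (phis Rb delta : R) (x : phase) : Prop :=
  (in_ball (2 * PI - phis) (PI - phis) delta x \/ in_ball phis phis delta x) /\
  Mr_in phis Rb x.

From Stdlib Require Import Reals Lra Lia.
Open Scope R_scope.

(* Write e = 1/(R sin phi_* ).  If a chord with unit direction v joins p on Gamma_r to q
   on Gamma_R, then |p|^2 is at least the squared distance |q|^2 - (q.v)^2 from O_R to the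
   chord.  Here |q|^2 - |p|^2 = 2 |O_rO_R| (cos phi_* - cos phi_p), while (q.v)^2 is the
   square of d = R sin theta_q.  So d < 2 at the Gamma_R end pins p within 3e of a corner of
   the lens.  A small d also makes the chord almost radial at q, and Gamma_R spans only
   angles O(e), so the direction of the chord, hence the angle at p, is within 7e of its
   corner value; as sqrt(3^2 + 7^2) e < 14.6 e <= delta_*, p is in the delta_*-ball.  This
   applies to x0 with q = x1, and to x2 with q the last bounce on Gamma_R, because
   reflections along Gamma_R preserve theta, so that d there is still d_1. *)

Lemma sin_ge_linear y : 0 <= y <= 1 -> 4/5 * y <= sin y.
Proof.
  intros Hy.
  destruct (pre_sin_bound y 0 (proj1 Hy) ltac:(lra)) as [Hsin _].
  assert (Hcube : y ^ 3 <= y) by nra.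
  unfold sin_approx, sin_term in Hsin; simpl in Hsin.
  lra.
Qed.

Lemma angle_le_of_sin_le y b : 0 <= y <= PI/2 -> sin y <= b -> b <= 1/3 -> y <= 5/4 * b.
Proof.
  intros Hy Hs Hb. pose proof PI2_1.
  destruct (Rle_lt_dec y 1) as [Hy1|Hy1].
  - pose proof (sin_ge_linear y (conj (proj1 Hy) Hy1)). lra.
  - assert (sin 1 < sin y) by (apply sin_increasing_1; lra).
    pose proof (sin_ge_linear 1 ltac:(lra)). lra.
Qed.

Lemma angle_near_0_or_PI y b : 0 < y < PI -> sin y <= b -> b <= 1/3 ->
  y <= 5/4 * b \/ PI - y <= 5/4 * b.
Proof.
  intros Hy Hs Hb. destruct (Rle_lt_dec y (PI/2)).
  - left. apply angle_le_of_sin_le; lra.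
  - right. apply angle_le_of_sin_le; [lra | rewrite sin_PI_x | ]; lra.
Qed.

Lemma angle_small_of_sin_small x lo b :
  - PI + 5/4 * b < lo < - (5/4 * b) -> lo < x < lo + PI ->
  - b <= sin x <= b -> b <= 1/3 -> - (5/4 * b) <= x <= 5/4 * b.
Proof.
  intros Hlo Hx Hs Hb. pose proof PI2_1.
  destruct (Rle_lt_dec x (PI/2)) as [Hx1|Hx1].
  - destruct (Rle_lt_dec 0 x) as [Hx2|Hx2].
    + pose proof (angle_le_of_sin_le x b ltac:(lra) ltac:(lra) Hb). lra.
    + destruct (Rle_lt_dec (- (PI/2)) x) as [Hx3|Hx3].
      * assert (- x <= 5/4 * b)
          by (apply angle_le_of_sin_le; [lra | rewrite sin_neg; lra | lra]).
        lra.
      * assert (x + PI <= 5/4 * b)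
          by (apply angle_le_of_sin_le; [lra | rewrite neg_sin; lra | lra]).
        lra.
  - assert (PI - x <= 5/4 * b)
      by (apply angle_le_of_sin_le; [lra | rewrite sin_PI_x; lra | lra]).
    lra.
Qed.

Lemma sin_sq_add_cos_sq x : sin x ^ 2 + cos x ^ 2 = 1.
Proof. rewrite <- (sin2_cos2 x). unfold Rsqr. ring. Qed.

Lemma sin_sq_eq_of_cos_eq a b : cos a = cos b -> sin a ^ 2 = sin b ^ 2.
Proof.
  intros Hab. pose proof (sin_sq_add_cos_sq a). pose proof (sin_sq_add_cos_sq b).
  rewrite Hab in *. lra.
Qed.

Lemma sin_2PI_minus y : sin (2 * PI - y) = - sin y.
Proof. rewrite sin_minus, sin_2PI, cos_2PI. ring. Qed.

Lemma cos_2PI_minus y : cos (2 * PI - y) = cos y.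
Proof. rewrite cos_minus, sin_2PI, cos_2PI. ring. Qed.

Lemma cos_le_cos_on_arc a f : 0 < a < PI/2 -> a <= f <= 2 * PI - a -> cos f <= cos a.
Proof.
  intros Ha Hf. destruct (Rle_lt_dec f PI).
  - apply cos_decr_1; lra.
  - rewrite <- cos_2PI_minus. apply cos_decr_1; lra.
Qed.

Lemma sin_mul_sin_le_of_cos_plus_ge a u e : 0 < a < PI/2 -> 0 <= u <= PI - a -> e < 1 ->
  cos a - e <= cos (a + u) -> u < PI/2 /\ sin a * sin u <= e.
Proof.
  intros Ha Hu He Hc.
  assert (0 < sin a) by (apply sin_gt_0; lra).
  assert (0 < cos a) by (apply cos_gt_0; lra).
  pose proof (sin_sq_add_cos_sq a).
  destruct (Rlt_le_dec u (PI/2)) as [Hu2|Hu2].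
  - split; [exact Hu2|]. rewrite cos_plus in Hc.
    assert (0 <= sin u) by (apply sin_ge_0; lra).
    pose proof (COS_bound u). nra.
  - exfalso.
    assert (Hle : cos (a + u) <= cos (a + PI/2)) by (apply cos_decr_1; lra).
    rewrite (cos_plus a (PI/2)), cos_PI2, sin_PI2 in Hle. nra.
Qed.

Lemma velx_angle p : velx p = - sin (ph p + th p).
Proof. unfold velx, tanx. rewrite sin_plus. ring. Qed.

Lemma vely_angle p : vely p = cos (ph p + th p).
Proof. unfold vely, tany. rewrite cos_plus. ring. Qed.

Lemma vel_unit p : velx p ^ 2 + vely p ^ 2 = 1.
Proof. rewrite velx_angle, vely_angle, <- (sin_sq_add_cos_sq (ph p + th p)). ring. Qed.

Lemma chord_sagitta px py qx qy vx vy tau : px = qx + tau * vx -> py = qy + tau * vy ->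
  vx ^ 2 + vy ^ 2 = 1 -> qx ^ 2 + qy ^ 2 - (px ^ 2 + py ^ 2) <= (qx * vx + qy * vy) ^ 2.
Proof.
  intros -> -> Hv.
  replace (qx ^ 2 + qy ^ 2 - ((qx + tau * vx) ^ 2 + (qy + tau * vy) ^ 2))
    with (- 2 * tau * (qx * vx + qy * vy) - tau ^ 2 * (vx ^ 2 + vy ^ 2)) by ring.
  rewrite Hv. pose proof (pow2_ge_0 (qx * vx + qy * vy + tau)). nra.
Qed.

(* Along a line, the squared distance to a point is a convex quadratic in the time. *)
Lemma ray_leaves_disk wx wy vx vy ox oy r2 t t' : vx ^ 2 + vy ^ 2 = 1 -> 0 < t < t' ->
  (wx - ox) ^ 2 + (wy - oy) ^ 2 <= r2 ->
  r2 <= (wx + t * vx - ox) ^ 2 + (wy + t * vy - oy) ^ 2 ->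
  r2 < (wx + t' * vx - ox) ^ 2 + (wy + t' * vy - oy) ^ 2.
Proof.
  intros Hv Ht H0 Ht1.
  set (g0 := (wx - ox) ^ 2 + (wy - oy) ^ 2) in *.
  set (g := (wx + t * vx - ox) ^ 2 + (wy + t * vy - oy) ^ 2) in *.
  set (g' := (wx + t' * vx - ox) ^ 2 + (wy + t' * vy - oy) ^ 2).
  assert (Hconv : t' * g = (t' - t) * g0 + t * g' - t * t' * (t' - t)).
  { unfold g, g', g0. rewrite <- (Rmult_1_r (t * t' * (t' - t))), <- Hv. ring. }
  assert (0 < t * t' * (t' - t)) by (apply Rmult_lt_0_compat; [nra | lra]).
  assert ((t' - t) * g0 <= (t' - t) * r2) by (apply Rmult_le_compat_l; lra).
  nra.
Qed.

Definition near_point (a b e : R) (x : phase) : Prop :=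
  Rabs (ph x - a) <= 3 * e /\ Rabs (th x - b) <= 7 * e.

Lemma in_ball_of_near_point a b e delta x : 0 < e -> 146/10 * e <= delta ->
  near_point a b e x -> in_ball a b delta x.
Proof.
  intros He Hd [Hph Hth]. unfold in_ball.
  rewrite <- (sqrt_pow2 delta) by lra. apply sqrt_lt_1_alt.
  rewrite <- (pow2_abs (ph x - a)), <- (pow2_abs (th x - b)).
  pose proof (Rabs_pos (ph x - a)). pose proof (Rabs_pos (th x - b)).
  split; nra.
Qed.

Lemma MR_posx phis Rb p : inMR phis Rb p -> posx phis Rb p = Rb * cos (ph p).
Proof. intros [Hsd _]. unfold posx, center_x, radius. rewrite Hsd. ring. Qed.

Lemma MR_posy phis Rb p : inMR phis Rb p -> posy phis Rb p = Rb * sin (ph p).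
Proof. intros [Hsd _]. unfold posy, radius. rewrite Hsd. ring. Qed.

Lemma Mr_posx phis Rb p : inMr phis Rb p -> posx phis Rb p = dist_centers phis Rb + cos (ph p).
Proof. intros [Hsd _]. unfold posx, center_x, radius, rr. rewrite Hsd. ring. Qed.

Lemma Mr_posy phis Rb p : inMr phis Rb p -> posy phis Rb p = sin (ph p).
Proof. intros [Hsd _]. unfold posy, radius, rr. rewrite Hsd. ring. Qed.

Definition corner_eps (phis Rb : R) : R := / (Rb * sin phis).

Section Lens.

Variables phis Rb : R.
Hypothesis phis_range : 0 < phis < PI/2.
Hypothesis Rb_ge_17 : 17 <= Rb.

Let c := dist_centers phis Rb.

Lemma sin_phis_pos : 0 < sin phis.
Proof. apply sin_gt_0; lra. Qed.

Lemma cos_phis_pos : 0 < cos phis.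
Proof. apply cos_gt_0; lra. Qed.

Lemma dist_centers_spec : (c + cos phis) ^ 2 = Rb ^ 2 - sin phis ^ 2 /\ Rb - 2 <= c.
Proof.
  pose proof sin_phis_pos. pose proof (SIN_bound phis).
  assert (Hpos : 0 <= Rb ^ 2 - rr ^ 2 * sin phis ^ 2) by (unfold rr; nra).
  assert (Hc : c + cos phis = sqrt (Rb ^ 2 - rr ^ 2 * sin phis ^ 2))
    by (unfold c, dist_centers, rr; ring).
  pose proof (sqrt_sqrt _ Hpos). pose proof (sqrt_pos (Rb ^ 2 - rr ^ 2 * sin phis ^ 2)).
  rewrite Hc. unfold rr in *. split; [nra|].
  pose proof (COS_bound phis). nra.
Qed.

Lemma Phis_spec : sin (Phis phis Rb) = sin phis / Rb /\ 0 <= Phis phis Rb <= PI/2 /\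
  Rb * cos (Phis phis Rb) = c + cos phis.
Proof.
  destruct dist_centers_spec as [Hsq Hc].
  pose proof sin_phis_pos. pose proof cos_phis_pos. pose proof (SIN_bound phis).
  assert (Hratio : 0 < rr * sin phis / Rb <= 1).
  { unfold rr. split; [apply Rdiv_lt_0_compat; lra|].
    apply (Rmult_le_reg_r Rb); [lra|]. field_simplify; lra. }
  assert (Hsin : sin (Phis phis Rb) = sin phis / Rb)
    by (unfold Phis; rewrite sin_asin by lra; unfold rr; field; lra).
  pose proof (asin_bound (rr * sin phis / Rb)) as Hb. fold (Phis phis Rb) in Hb.
  assert (Hnn : 0 <= Phis phis Rb).
  { destruct (Rle_lt_dec 0 (Phis phis Rb)) as [|Hneg]; [assumption|].
    assert (sin (Phis phis Rb) < 0) by (apply sin_lt_0_var; lra).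
    unfold rr in Hratio. lra. }
  assert (0 <= cos (Phis phis Rb)) by (apply cos_ge_0; lra).
  split; [exact Hsin | split; [lra|]].
  apply Rsqr_inj; [nra | nra |]. rewrite !Rsqr_pow2, Hsq.
  pose proof (sin_sq_add_cos_sq (Phis phis Rb)) as Hp. rewrite Hsin in Hp.
  replace ((Rb * cos (Phis phis Rb)) ^ 2) with (Rb ^ 2 * cos (Phis phis Rb) ^ 2) by ring.
  replace (cos (Phis phis Rb) ^ 2) with (1 - (sin phis / Rb) ^ 2) by lra.
  field. lra.
Qed.

Lemma Phis_le : Phis phis Rb <= 5/4 * (sin phis / Rb).
Proof.
  destruct Phis_spec as [Hsin [HPhis _]]. pose proof (SIN_bound phis).
  apply angle_le_of_sin_le; [lra | lra |].
  apply (Rmult_le_reg_r Rb); [lra|]. field_simplify; lra.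
Qed.

Lemma MR_ph_bound p : inMR phis Rb p ->
  - (5/4 * (sin phis / Rb)) <= ph p <= 5/4 * (sin phis / Rb).
Proof. intros [_ [Hph _]]. pose proof Phis_le. lra. Qed.

Lemma MR_posy_bound p : inMR phis Rb p -> - sin phis < posy phis Rb p < sin phis.
Proof.
  intros Hp. rewrite (MR_posy _ _ _ Hp). destruct Hp as [_ [Hph _]].
  destruct Phis_spec as [Hsin [HPhis _]].
  assert (Hlo : sin (- Phis phis Rb) < sin (ph p)) by (apply sin_increasing_1; lra).
  assert (Hhi : sin (ph p) < sin (Phis phis Rb)) by (apply sin_increasing_1; lra).
  rewrite sin_neg, Hsin in Hlo. rewrite Hsin in Hhi.
  replace (sin phis) with (Rb * (sin phis / Rb)) by (field; lra).
  split; nra.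
Qed.

Lemma MR_inside_r_disk p : inMR phis Rb p -> (posx phis Rb p - c) ^ 2 + posy phis Rb p ^ 2 < 1.
Proof.
  intros Hp. destruct Phis_spec as [_ [HPhis HcosPhis]]. destruct dist_centers_spec as [Hsq Hc].
  assert (Hcos : cos (Phis phis Rb) < cos (ph p)).
  { destruct Hp as [_ [Hph _]]. destruct (Rle_lt_dec 0 (ph p)).
    - apply cos_decreasing_1; lra.
    - rewrite <- (cos_neg (ph p)). apply cos_decreasing_1; lra. }
  rewrite (MR_posx _ _ _ Hp), (MR_posy _ _ _ Hp).
  pose proof (sin_sq_add_cos_sq (ph p)). pose proof (sin_sq_add_cos_sq phis).
  assert (Rb * cos (Phis phis Rb) < Rb * cos (ph p)) by (apply Rmult_lt_compat_l; lra).
  nra.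
Qed.

Lemma Mr_norm p : inMr phis Rb p ->
  posx phis Rb p ^ 2 + posy phis Rb p ^ 2 = Rb ^ 2 - 2 * c * (cos phis - cos (ph p)).
Proof.
  intros Hp. destruct dist_centers_spec as [Hsq _].
  rewrite (Mr_posx _ _ _ Hp), (Mr_posy _ _ _ Hp). fold c.
  pose proof (sin_sq_add_cos_sq (ph p)). pose proof (sin_sq_add_cos_sq phis). nra.
Qed.

Lemma Mr_inside_R_disk p : inMr phis Rb p -> posx phis Rb p ^ 2 + posy phis Rb p ^ 2 <= Rb ^ 2.
Proof.
  intros Hp. rewrite (Mr_norm p Hp). destruct dist_centers_spec as [_ Hc].
  destruct Hp as [_ [Hph _]]. pose proof (cos_le_cos_on_arc phis (ph p) phis_range Hph).
  assert (0 <= 2 * c * (cos phis - cos (ph p))) by (apply Rmult_le_pos; lra).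
  lra.
Qed.

Lemma inM_inside_lens p : inM phis Rb p ->
  posx phis Rb p ^ 2 + posy phis Rb p ^ 2 <= Rb ^ 2 /\
  (posx phis Rb p - c) ^ 2 + posy phis Rb p ^ 2 <= 1.
Proof.
  intros [Hp | Hp].
  - split; [exact (Mr_inside_R_disk p Hp)|].
    rewrite (Mr_posx _ _ _ Hp), (Mr_posy _ _ _ Hp). fold c.
    pose proof (sin_sq_add_cos_sq (ph p)). nra.
  - split; [|pose proof (MR_inside_r_disk p Hp); lra].
    rewrite (MR_posx _ _ _ Hp), (MR_posy _ _ _ Hp).
    pose proof (sin_sq_add_cos_sq (ph p)). nra.
Qed.

Lemma Mr_on_r_circle p : inMr phis Rb p -> (posx phis Rb p - c) ^ 2 + posy phis Rb p ^ 2 = 1.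
Proof.
  intros Hp. rewrite (Mr_posx _ _ _ Hp), (Mr_posy _ _ _ Hp). fold c.
  rewrite <- (sin_sq_add_cos_sq (ph p)). ring.
Qed.

Lemma MR_on_R_circle p : inMR phis Rb p -> posx phis Rb p ^ 2 + posy phis Rb p ^ 2 = Rb ^ 2.
Proof.
  intros Hp. rewrite (MR_posx _ _ _ Hp), (MR_posy _ _ _ Hp).
  rewrite <- (Rmult_1_r (Rb ^ 2)), <- (sin_sq_add_cos_sq (ph p)). ring.
Qed.

(* The ray from w leaves each of the two disks only once. *)
Lemma Fmap_Mr_MR_exclusive w y y' : Fmap phis Rb w y -> Fmap phis Rb w y' ->
  inMr phis Rb y -> inMR phis Rb y' -> False.
Proof.
  intros [Hw [_ [[t [Ht [Ex Ey]]] _]]] [_ [_ [[t' [Ht' [Ex' Ey']]] _]]] Hy Hy'.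
  destruct (inM_inside_lens w Hw) as [HwR Hwr].
  pose proof (Mr_on_r_circle y Hy) as Hyr. pose proof (Mr_inside_R_disk y Hy) as HyR.
  pose proof (MR_inside_r_disk y' Hy') as Hy'r. pose proof (MR_on_R_circle y' Hy') as Hy'R.
  pose proof (vel_unit w) as Hv.
  rewrite Ex, Ey in Hyr, HyR. rewrite Ex', Ey' in Hy'r, Hy'R.
  set (wx := posx phis Rb w) in *. set (wy := posy phis Rb w) in *.
  set (vx := velx w) in *. set (vy := vely w) in *.
  destruct (Rtotal_order t t') as [Hlt | [-> | Hgt]].
  - pose proof (ray_leaves_disk wx wy vx vy c 0 1 t t') as Hray.
    rewrite !Rminus_0_r in Hray. pose proof (Hray Hv (conj Ht Hlt) Hwr ltac:(lra)). lra.
  - lra.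
  - pose proof (ray_leaves_disk wx wy vx vy 0 0 (Rb ^ 2) t' t) as Hray.
    rewrite !Rminus_0_r in Hray. pose proof (Hray Hv (conj Ht' Hgt) HwR ltac:(lra)). lra.
Qed.

(* The chord and the radii to its two ends form an isosceles triangle. *)
Lemma Fmap_MR_MR_th w w' : Fmap phis Rb w w' -> inMR phis Rb w -> inMR phis Rb w' ->
  th w' = th w.
Proof.
  intros [_ [_ [[t [Ht [Ex Ey]]] Hc]]] Hw Hw'.
  rewrite (MR_posx _ _ _ Hw), (MR_posx _ _ _ Hw'), velx_angle in Ex.
  rewrite (MR_posy _ _ _ Hw), (MR_posy _ _ _ Hw'), vely_angle in Ey.
  rewrite velx_angle, vely_angle in Hc. unfold tanx, tany in Hc.
  rewrite sin_plus in Ex, Hc. rewrite cos_plus in Ey, Hc.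
  assert (Rb * cos (th w') = Rb * cos (th w)).
  { rewrite Hc.
    replace (Rb * (- (sin (ph w) * cos (th w) + cos (ph w) * sin (th w)) * - sin (ph w') +
      (cos (ph w) * cos (th w) - sin (ph w) * sin (th w)) * cos (ph w')))
    with ((sin (ph w) * cos (th w) + cos (ph w) * sin (th w)) * (Rb * sin (ph w')) +
      (cos (ph w) * cos (th w) - sin (ph w) * sin (th w)) * (Rb * cos (ph w'))) by ring.
    rewrite Ex, Ey.
    match goal with |- ?L = ?R => replace L with (R * (sin (ph w) ^ 2 + cos (ph w) ^ 2)) by ring end.
    rewrite sin_sq_add_cos_sq. ring. }
  destruct Hw as [_ [_ Hth]]. destruct Hw' as [_ [_ Hth']].
  apply cos_inj; [lra | lra |]. apply (Rmult_eq_reg_l Rb); lra.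
Qed.

Lemma Fmap_MR_of_MR_image w y y' : Fmap phis Rb w y -> Fmap phis Rb w y' ->
  inMR phis Rb y' -> inMR phis Rb y.
Proof.
  intros Hy Hy' HMR. destruct (proj1 (proj2 Hy)) as [Hr | HR]; [|exact HR].
  exfalso. exact (Fmap_Mr_MR_exclusive w y y' Hy Hy' Hr HMR).
Qed.

Lemma Fmap_Mr_of_Mr_image w y y' : Fmap phis Rb w y -> Fmap phis Rb w y' ->
  inMr phis Rb y' -> inMr phis Rb y.
Proof.
  intros Hy Hy' HMr. destruct (proj1 (proj2 Hy)) as [Hr | HR]; [exact Hr|].
  exfalso. exact (Fmap_Mr_MR_exclusive w y' y Hy' Hy HMr HR).
Qed.

Lemma Fiter_MR_th n w z : Fiter phis Rb n w z -> inMR phis Rb w ->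
  (forall (m : nat) (w' : phase), (m < n)%nat -> Fiter phis Rb m w w' -> ~ MR_out phis Rb w') ->
  inMR phis Rb z /\ th z = th w.
Proof.
  induction 1 as [w | n w w1 z Hstep Hiter IH]; intros Hw Hmin; [tauto|].
  assert (Hw1 : inMR phis Rb w1).
  { destruct (proj1 (proj2 Hstep)) as [Hr | HR]; [|exact HR].
    exfalso. apply (Hmin O w ltac:(lia) (Fiter0 _ _ w)).
    split; [exact Hw | exists w1; split; [exact Hr | exact Hstep]]. }
  destruct (IH Hw1) as [Hz Hth].
  { intros m w' Hm Hw'. apply (Hmin (S m) w'); [lia | econstructor; eauto]. }
  split; [exact Hz|]. rewrite Hth. exact (Fmap_MR_MR_th w w1 Hstep Hw Hw1).
Qed.

Let e := corner_eps phis Rb.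

Hypothesis eps_small : 146/10 * e <= delta_star phis.

Lemma eps_pos : 0 < e.
Proof. pose proof sin_phis_pos. unfold e, corner_eps. apply Rinv_0_lt_compat. nra. Qed.

Lemma eps_le_phis : 146/10 * e <= phis.
Proof. pose proof (Rmin_l phis (PI/2 - phis)). unfold delta_star in eps_small. lra. Qed.

Lemma eps_le_compl_phis : 146/10 * e <= PI/2 - phis.
Proof. pose proof (Rmin_r phis (PI/2 - phis)). unfold delta_star in eps_small. lra. Qed.

Lemma eps_le : e <= 1/14.
Proof. pose proof eps_le_phis. pose proof eps_le_compl_phis. pose proof PI_4. lra. Qed.

Lemma inv_Rb_eq : / Rb = e * sin phis.
Proof. pose proof sin_phis_pos. unfold e, corner_eps. field. split; lra. Qed.

Lemma sin_phis_div_Rb_le : sin phis / Rb <= e.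
Proof.
  pose proof eps_pos. pose proof sin_phis_pos. pose proof (SIN_bound phis).
  assert (sin phis * sin phis <= 1) by nra.
  unfold Rdiv. rewrite inv_Rb_eq. nra.
Qed.

Lemma small_of_Rb_mul_sq_lt s : (Rb * s) ^ 2 < 4 -> - (2 * e) <= s <= 2 * e.
Proof.
  intros Hs. pose proof eps_pos. pose proof sin_phis_pos. pose proof (SIN_bound phis).
  assert (Habs : - 2 < Rb * s < 2) by nra.
  assert (Hinv : 2 * / Rb <= 2 * e) by (rewrite inv_Rb_eq; nra).
  assert (H2 : 2 <= Rb * (2 * e)).
  { apply (Rmult_le_compat_l Rb) in Hinv; [|lra].
    rewrite Rmult_comm, Rmult_assoc, Rinv_l in Hinv by lra. lra. }
  split; apply (Rmult_le_reg_l Rb); lra.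
Qed.

Lemma Mr_near_corner f : phis <= f <= 2 * PI - phis -> c * (cos phis - cos f) < 2 ->
  exists u, 0 <= u <= 3 * e /\ (f = phis + u \/ f = 2 * PI - phis - u).
Proof.
  intros Hf Hc. destruct dist_centers_spec as [_ Hdist].
  pose proof sin_phis_pos. pose proof eps_le.
  assert (Hu : forall u, 0 <= u <= PI - phis -> cos f = cos (phis + u) -> 0 <= u <= 3 * e).
  { intros u Hu Hcu.
    assert (He : cos phis - 2 / c <= cos (phis + u)).
    { rewrite <- Hcu. apply (Rmult_le_reg_l c); [lra|]. field_simplify; lra. }
    assert (Hc1 : 2 / c < 1) by (apply (Rmult_lt_reg_l c); [lra|]; field_simplify; lra).
    destruct (sin_mul_sin_le_of_cos_plus_ge phis u (2 / c) phis_range Hu Hc1 He) as [Hu2 Hs].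
    assert (0 <= sin u) by (apply sin_ge_0; lra).
    assert (Hs2 : sin phis * sin u * c <= 2).
    { apply (Rmult_le_reg_r (/ c)); [apply Rinv_0_lt_compat; lra|]. field_simplify; lra. }
    assert (Hs3 : sin u * (sin phis * Rb) * (15/17) <= 2) by nra.
    assert (Hs4 : sin u <= 34/15 * e).
    { assert (Hone : sin phis * Rb * e = 1).
      { unfold e, corner_eps. field. split; lra. }
      pose proof eps_pos. nra. }
    pose proof (angle_le_of_sin_le u (34/15 * e) ltac:(lra) Hs4 ltac:(lra)). lra. }
  destruct (Rle_lt_dec f PI).
  - exists (f - phis). split; [apply Hu; [lra | f_equal; ring] | left; ring].
  - exists (2 * PI - phis - f). split; [apply Hu; [lra|] | right; ring].
    replace (phis + (2 * PI - phis - f)) with (2 * PI - f) by ring.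
    symmetry. apply cos_2PI_minus.
Qed.

Lemma chord_Mr_MR_near_corner p q a tau : inMr phis Rb p -> inMR phis Rb q ->
  posx phis Rb p = posx phis Rb q + tau * - sin a ->
  posy phis Rb p = posy phis Rb q + tau * cos a ->
  (Rb * sin (a - ph q)) ^ 2 < 4 ->
  exists u, 0 <= u <= 3 * e /\ (ph p = phis + u \/ ph p = 2 * PI - phis - u).
Proof.
  intros Hp Hq Hx Hy Hsin.
  pose proof (chord_sagitta _ _ _ _ _ _ tau Hx Hy
    ltac:(rewrite <- (sin_sq_add_cos_sq a); ring)) as Hsag.
  rewrite (MR_on_R_circle q Hq), (Mr_norm p Hp), (MR_posx _ _ _ Hq), (MR_posy _ _ _ Hq) in Hsag.
  replace (Rb * cos (ph q) * - sin a + Rb * sin (ph q) * cos a) with (- (Rb * sin (a - ph q)))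
    in Hsag by (rewrite sin_minus; ring).
  apply Mr_near_corner; [apply Hp | nra].
Qed.

Lemma Mr_out_near_corner x0 x1 : inMr phis Rb x0 -> inMR phis Rb x1 -> Fmap phis Rb x0 x1 ->
  Rb * sin (th x1) < 2 ->
  near_point (2 * PI - phis) phis e x0 \/ near_point phis (PI - phis) e x0.
Proof.
  intros H0 H1 [_ [_ [[t [Ht [Ex Ey]]] Hc]]] Hd.
  rewrite velx_angle in Ex, Hc. rewrite vely_angle in Ey, Hc. unfold tanx, tany in Hc.
  set (a := ph x0 + th x0) in *.
  assert (Hcos : cos (th x1) = cos (a - ph x1)) by (rewrite cos_minus, Hc; ring).
  assert (Hsin : (Rb * sin (a - ph x1)) ^ 2 < 4).
  { destruct H1 as [_ [_ Hth1]]. assert (0 < sin (th x1)) by (apply sin_gt_0; lra).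
    assert (0 < Rb * sin (th x1)) by nra.
    rewrite Rpow_mult_distr, <- (sin_sq_eq_of_cos_eq _ _ Hcos). nra. }
  destruct (chord_Mr_MR_near_corner x0 x1 a (- t) H0 H1 ltac:(lra) ltac:(lra) Hsin)
    as [u [Hu Hcorner]].
  pose proof (small_of_Rb_mul_sq_lt _ Hsin) as Hsmall.
  pose proof (MR_ph_bound x1 H1). pose proof sin_phis_div_Rb_le.
  pose proof eps_pos. pose proof eps_le_phis. pose proof eps_le. pose proof PI2_1.
  destruct H0 as [_ [_ Hth0]].
  destruct Hcorner as [Hf | Hf]; [right | left].
  - assert (Hx : - (5/4 * (2 * e)) <= a - ph x1 - PI <= 5/4 * (2 * e)).
    { apply (angle_small_of_sin_small _ (ph x0 - ph x1 - PI)); [lra | unfold a; lra | | lra].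
      rewrite sin_minus, sin_PI, cos_PI. lra. }
    split; apply Rabs_le; unfold a in Hx; lra.
  - assert (Hx : - (5/4 * (2 * e)) <= a - ph x1 - 2 * PI <= 5/4 * (2 * e)).
    { apply (angle_small_of_sin_small _ (ph x0 - ph x1 - 2 * PI)); [lra | unfold a; lra | | lra].
      rewrite sin_minus, sin_2PI, cos_2PI. lra. }
    split; apply Rabs_le; unfold a in Hx; lra.
Qed.

Lemma Mr_in_near_corner z x2 : inMR phis Rb z -> inMr phis Rb x2 -> Fmap phis Rb z x2 ->
  Rb * sin (th z) < 2 ->
  near_point (2 * PI - phis) (PI - phis) e x2 \/ near_point phis phis e x2.
Proof.
  intros Hz H2 [_ [_ [[t [Ht [Ex Ey]]] Hc]]] Hd.
  rewrite velx_angle in Ex, Hc. rewrite vely_angle in Ey, Hc. unfold tanx, tany in Hc.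
  set (a := ph z + th z) in *.
  assert (Hcos : cos (th x2) = cos (ph x2 - a)) by (rewrite cos_minus, Hc; ring).
  pose proof Hz as [_ [_ Hthz]]. pose proof H2 as [_ [Hph2 Hth2]].
  assert (0 < sin (th z)) by (apply sin_gt_0; lra).
  assert (Hsin : (Rb * sin (a - ph z)) ^ 2 < 4).
  { replace (a - ph z) with (th z) by (unfold a; ring).
    assert (0 < Rb * sin (th z)) by nra. nra. }
  destruct (chord_Mr_MR_near_corner x2 z a t H2 Hz ltac:(lra) ltac:(lra) Hsin)
    as [u [Hu Hcorner]].
  replace (a - ph z) with (th z) in Hsin by (unfold a; ring).
  pose proof (small_of_Rb_mul_sq_lt _ Hsin) as Hsmall.
  pose proof (MR_ph_bound z Hz). pose proof sin_phis_div_Rb_le.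
  pose proof eps_pos. pose proof eps_le_phis. pose proof eps_le_compl_phis. pose proof eps_le.
  pose proof PI2_1. pose proof sin_phis_pos.
  (* The corner reached fixes the sign of cos a, hence whether th z is near 0 or near PI. *)
  rewrite (Mr_posy _ _ _ H2) in Ey. pose proof (MR_posy_bound z Hz) as Hlow.
  pose proof (angle_near_0_or_PI (th z) (2 * e) ltac:(lra) ltac:(lra) ltac:(lra)) as Hthz_cases.
  assert (Hth2_eq : 0 <= ph x2 - a <= PI -> th x2 = ph x2 - a)
    by (intros; apply cos_inj; lra).
  destruct Hcorner as [Hf | Hf]; [right | left].
  - assert (sin phis <= sin (ph x2)) by (rewrite Hf; apply sin_incr_1; lra).
    assert (0 < cos a) by nra.
    assert (Hthz_small : th z <= 5/4 * (2 * e)).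
    { destruct Hthz_cases as [|Hbig]; [assumption|]. exfalso.
      assert (Hneg : 0 < cos (a - PI)) by (apply cos_gt_0; unfold a; lra).
      rewrite cos_minus, cos_PI, sin_PI in Hneg. lra. }
    unfold near_point. rewrite Hth2_eq by (unfold a; lra).
    split; apply Rabs_le; unfold a; lra.
  - assert (sin (ph x2) <= - sin phis).
    { rewrite Hf. replace (2 * PI - phis - u) with (2 * PI - (phis + u)) by ring.
      rewrite sin_2PI_minus. assert (sin phis <= sin (phis + u)) by (apply sin_incr_1; lra).
      lra. }
    assert (cos a < 0) by nra.
    assert (Hthz_large : PI - th z <= 5/4 * (2 * e)).
    { destruct Hthz_cases as [Hsmall_z|]; [|assumption]. exfalso.
      assert (0 < cos a) by (apply cos_gt_0; unfold a; lra). lra. }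
    unfold near_point. rewrite Hth2_eq by (unfold a; lra).
    split; apply Rabs_le; unfold a; lra.
Qed.

End Lens.

Lemma lens_constants phis Rb : 0 < phis < PI / 2 ->
  Rb >= Rmax (34 * rr / phis) (146 / 10 * rr / (delta_star phis * sin phis)) ->
  17 <= Rb /\ 146 / 10 * corner_eps phis Rb <= delta_star phis.
Proof.
  intros Hphis HRb. unfold rr in HRb. pose proof PI_4.
  pose proof (Rmax_l (34 * 1 / phis) (146 / 10 * 1 / (delta_star phis * sin phis))).
  pose proof (Rmax_r (34 * 1 / phis) (146 / 10 * 1 / (delta_star phis * sin phis))).
  assert (Hsin : 0 < sin phis) by (apply sin_gt_0; lra).
  assert (Hdelta : 0 < delta_star phis) by (apply Rmin_glb_lt; lra).
  assert (Hk : 0 < delta_star phis * sin phis) by (apply Rmult_lt_0_compat; lra).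
  assert (H17 : 17 <= 34 * 1 / phis).
  { apply (Rmult_le_reg_r phis); [lra|]. field_simplify; lra. }
  assert (Hprod : 146 / 10 <= Rb * (delta_star phis * sin phis)).
  { replace (146 / 10) with (146 / 10 * 1 / (delta_star phis * sin phis) * (delta_star phis * sin phis))
      by (field; lra).
    apply Rmult_le_compat_r; lra. }
  split; [lra|].
  unfold corner_eps. apply (Rmult_le_reg_r (Rb * sin phis)); [nra|].
  field_simplify; [nra | lra].
Qed.

Theorem mainTheorem3 (phis Rb : R) (x x0 x1 x2 : phase) :
  0 < phis < PI / 2 ->
  Rb >= Rmax (34 * rr / phis) (146 / 10 * rr / (delta_star phis * sin phis)) ->
  inMr phis Rb x ->
  is_x0 phis Rb x x0 ->
  is_x1 phis Rb x0 x1 ->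
  is_x2 phis Rb x1 x2 ->
  Rb * sin (th x1) < 2 * rr ->
  Vset phis Rb (delta_star phis) x0 /\ Uset phis Rb (delta_star phis) x2.
Proof.
  intros Hphis HRb _ [n0 [_ [Hx0out _]]] Hx01 [n1 [z [Hiter [Hzout [Hzmin Hz2]]]]] Hd1.
  unfold rr in Hd1; rewrite Rmult_1_r in Hd1.
  destruct (lens_constants phis Rb Hphis HRb) as [H17 Heps].
  pose proof (eps_pos phis Rb Hphis H17) as He.
  destruct Hx0out as [Hx0 [y1 [Hy1 Hx0y1]]].
  pose proof (Fmap_MR_of_MR_image phis Rb Hphis H17 x0 x1 y1 Hx01 Hx0y1 Hy1) as Hx1.
  destruct (Fiter_MR_th phis Rb Hphis H17 n1 x1 z Hiter Hx1 Hzmin) as [Hz Hthz].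
  destruct Hzout as [_ [y2 [Hy2 Hzy2]]].
  pose proof (Fmap_Mr_of_Mr_image phis Rb Hphis H17 z x2 y2 Hz2 Hzy2 Hy2) as Hx2.
  split.
  - split; [|split; [exact Hx0 | exists y1; split; assumption]].
    destruct (Mr_out_near_corner phis Rb Hphis H17 Heps x0 x1 Hx0 Hx1 Hx01 Hd1) as [Hn | Hn];
      [left | right]; exact (in_ball_of_near_point _ _ _ _ _ He Heps Hn).
  - split; [|split; [exact Hx2 | exists z; split; assumption]].
    rewrite <- Hthz in Hd1.
    destruct (Mr_in_near_corner phis Rb Hphis H17 Heps z x2 Hz Hx2 Hz2 Hd1) as [Hn | Hn];
      [left | right]; exact (in_ball_of_near_point _ _ _ _ _ He Heps Hn).
Qed.
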